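(* If a quadrilateral $q$ is $\frac{\pi}{12}$-near square and has two adjacent acute angles, then $q$ has a periodic billiard path.
   Context: A quadrilateral is cut by a diagonal into two triangles. Its parameters $(a_1,a_2,a_3,a_4)$ are the four angles that the diagonal makes with the four sides (the angles of the two triangles at the endpoints of the diagonal). For $\varepsilon>0$, the quadrilateral is $\varepsilon$-near square if $|a_i-\pi/4|<\varepsilon$ for all $i$. A billiard path is a straight-line trajectory inside the polygon that reflects off the sides with angle of incidence equal to angle of reflection. Trajectories hitting vertices are excluded. It is periodic if it repeats itself. *)

From Stdlib Require Import Reals Lra.
Open Scope R_scope.

Definition point : Type := (R * R)%type.

Definition vsub (p q : point) : point := (fst p - fst q, snd p - snd q).
Definition vdot (u v : point) : R := fst u * fst v + snd u * snd v.
Definition vcross (u v : point) : R := fst u * snd v - snd u * fst v.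
Definition vnorm (u : point) : R := sqrt (vdot u u).
Definition vscale (c : R) (u : point) : point := (c * fst u, c * snd u).

Definition angle (P Q S : point) : R :=
  acos (vdot (vsub P Q) (vsub S Q) / (vnorm (vsub P Q) * vnorm (vsub S Q))).

(** A quadrilateral ABCD cut by the diagonal AC into the two nondegenerate
    triangles ABC and ACD: B and D lie strictly on opposite sides of line AC. *)
Definition diag_quadrilateral (A B C D : point) : Prop :=
  vcross (vsub C A) (vsub B A) * vcross (vsub C A) (vsub D A) < 0.

(** The parameters (a1,a2,a3,a4): angles of the triangles ABC, ACD at the
    endpoints A, C of the diagonal, i.e. the angles between AC and the sides. *)
Definition a1 (A B C D : point) : R := angle B A C.
Definition a2 (A B C D : point) : R := angle A C B.
Definition a3 (A B C D : point) : R := angle A C D.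
Definition a4 (A B C D : point) : R := angle C A D.

Definition near_square (eps : R) (A B C D : point) : Prop :=
  Rabs (a1 A B C D - PI/4) < eps /\ Rabs (a2 A B C D - PI/4) < eps /\
  Rabs (a3 A B C D - PI/4) < eps /\ Rabs (a4 A B C D - PI/4) < eps.

(** Vertices V_0 = A, V_1 = B, V_2 = C, V_3 = D (indices mod 4);
    side i is the segment [V_i, V_{i+1}]. *)
Definition vert (A B C D : point) (i : nat) : point :=
  match Nat.modulo i 4 with
  | 0%nat => A | 1%nat => B | 2%nat => C | _ => D
  end.

Definition interior_angle (A B C D : point) (i : nat) : R :=
  angle (vert A B C D (i + 3)) (vert A B C D i) (vert A B C D (i + 1)).

Definition two_adjacent_acute (A B C D : point) : Prop :=
  exists i : nat, (i < 4)%nat /\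
    interior_angle A B C D i < PI/2 /\ interior_angle A B C D (i + 1) < PI/2.

Definition on_open_side (A B C D : point) (i : nat) (p : point) : Prop :=
  exists t : R, 0 < t < 1 /\
    p = (fst (vert A B C D i) + t * (fst (vert A B C D (i+1)) - fst (vert A B C D i)),
         snd (vert A B C D i) + t * (snd (vert A B C D (i+1)) - snd (vert A B C D i))).

Definition reflect (u d : point) : point :=
  vsub (vscale (2 * vdot d u / vdot u u) u) d.

(** A periodic billiard path: a cyclic sequence of n bounce points p j on
    the open sides k j (never at a vertex), consecutive bounces on different
    sides (so each chord is a straight segment through the convex interior),
    satisfying the law of reflection at each bounce: the outgoing direction
    is a positive multiple of the mirror image of the incoming direction in
    the side. *)
Definition periodic_billiard_path (A B C D : point) : Prop :=
  exists (n : nat) (p : nat -> point) (k : nat -> nat),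
    (0 < n)%nat /\
    (forall j, p (j + n)%nat = p j /\ k (j + n)%nat = k j) /\
    (forall j, (k j < 4)%nat /\ on_open_side A B C D (k j) (p j)) /\
    (forall j, k (S j) <> k j) /\
    (forall j, exists lam : R, 0 < lam /\
       vsub (p (S (S j))) (p (S j)) =
       vscale lam (reflect (vsub (vert A B C D (k (S j) + 1)) (vert A B C D (k (S j))))
                           (vsub (p (S j)) (p j)))).

From Stdlib Require Import Reals Lra Psatz Lia.
Open Scope R_scope.

(* Since each a_i lies in (pi/6, pi/3), the law of sines in the triangles ABC
   and ACD puts every side length between |AC|/2 and |AC|, and writing the
   sides in polar form in a frame along AC shows that every interior angle
   lies in (pi/3, 2pi/3).  At two adjacent acute vertices X, Y (with
   neighbours W, Z) the lines WX and ZY therefore meet at a point O such that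
   the triangle OXY is acute.  Its orthic triangle, the Fagnano orbit, is a
   3-periodic billiard path of OXY, and the bounds above put its three
   vertices strictly inside the sides WX, XY, YZ of the quadrilateral. *)

Definition vadd (u v : point) : point := (fst u + fst v, snd u + snd v).

Definition vopp (u : point) : point := (- fst u, - snd u).

Definition perp (u : point) : point := (- snd u, fst u).

Definition vunit (u : point) : point := vscale (/ vnorm u) u.

Ltac vsimpl :=
  repeat match goal with P : point |- _ => destruct P end;
  unfold vadd, vopp, perp, vscale, vdot, vcross, vsub in *; simpl in *.

Ltac vring := vsimpl; first [ring | f_equal; ring].

Lemma vdot_self_nonneg (u : point) : 0 <= vdot u u.
Proof. vsimpl; nra. Qed.

Lemma vdot_self_pos (u v : point) : 0 < vdot u v -> 0 < vdot u u.
Proof.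
  intros H. destruct (vdot_self_nonneg u) as [|Z]; [assumption|].
  exfalso. destruct u as [u1 u2], v as [v1 v2]; unfold vdot in *; simpl in *.
  assert (u1 = 0) by nra. assert (u2 = 0) by nra. subst. lra.
Qed.

Lemma vnorm_sqr (u : point) : vnorm u * vnorm u = vdot u u.
Proof. apply sqrt_sqrt, vdot_self_nonneg. Qed.

Lemma vnorm_vsub_sym (P Q : point) : vnorm (vsub P Q) = vnorm (vsub Q P).
Proof. unfold vnorm; f_equal; vring. Qed.

Lemma vdot_comm (u v : point) : vdot u v = vdot v u.
Proof. vring. Qed.

Lemma vdot_vscale_l (c : R) (u v : point) : vdot (vscale c u) v = c * vdot u v.
Proof. vring. Qed.

Lemma vdot_vscale (c c' : R) (u v : point) :
  vdot (vscale c u) (vscale c' v) = c * c' * vdot u v.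
Proof. vring. Qed.

Lemma vcross_antisym (u v : point) : vcross u v = - vcross v u.
Proof. vring. Qed.

Lemma lagrange_identity (u v : point) :
  vdot u u * vdot v v = vdot u v ^ 2 + vcross u v ^ 2.
Proof. vring. Qed.

Lemma vnorm_pos_of_vcross (u v : point) :
  vcross u v <> 0 -> 0 < vnorm u /\ 0 < vnorm v.
Proof.
  intros Hx.
  assert (Hp : 0 < vdot u u * vdot v v).
  { rewrite lagrange_identity.
    assert (0 < vcross u v ^ 2) by (rewrite <- Rsqr_pow2; apply Rsqr_pos_lt, Hx).
    pose proof (pow2_ge_0 (vdot u v)). lra. }
  pose proof (vdot_self_nonneg u); pose proof (vdot_self_nonneg v).
  split; apply sqrt_lt_R0; nra.
Qed.

Lemma vopp_involutive (u : point) : vopp (vopp u) = u.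
Proof. vring. Qed.

Lemma vunit_vdot (u : point) : 0 < vnorm u -> vdot (vunit u) (vunit u) = 1.
Proof.
  intros Hu. unfold vunit.
  transitivity (vdot u u / (vnorm u * vnorm u)); [vsimpl; field; lra|].
  rewrite vnorm_sqr. field. rewrite <- vnorm_sqr. nra.
Qed.

Lemma vunit_vsub_sym (P Q : point) : vunit (vsub Q P) = vopp (vunit (vsub P Q)).
Proof. unfold vunit; rewrite (vnorm_vsub_sym Q P); vring. Qed.

Lemma angle_sym (P Q S : point) : angle P Q S = angle S Q P.
Proof.
  unfold angle. f_equal. rewrite Rmult_comm. f_equal. vring.
Qed.

Lemma angle_bounds (P Q S : point) : 0 <= angle P Q S <= PI.
Proof. apply acos_bound. Qed.

Lemma angle_cos (P Q S : point) :
  0 < vnorm (vsub P Q) -> 0 < vnorm (vsub S Q) ->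
  vdot (vsub P Q) (vsub S Q) = vnorm (vsub P Q) * vnorm (vsub S Q) * cos (angle P Q S).
Proof.
  unfold angle; set (u := vsub P Q); set (v := vsub S Q); intros Hu Hv.
  set (n := vnorm u * vnorm v).
  assert (Hn : 0 < n) by (unfold n; nra).
  assert (Hcs : vdot u v ^ 2 <= n * n).
  { replace (n * n) with (vdot u u * vdot v v)
      by (unfold n; rewrite <- vnorm_sqr, <- (vnorm_sqr v); ring).
    rewrite lagrange_identity. pose proof (pow2_ge_0 (vcross u v)). lra. }
  assert (Hi : n * / n = 1) by (field; lra).
  assert (0 < / n) by (apply Rinv_0_lt_compat; exact Hn).
  rewrite cos_acos; [unfold Rdiv; fold n; field; lra|].
  unfold Rdiv; fold n. split; nra.
Qed.

Lemma angle_sin (P Q S : point) (sg : R) :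
  sg * sg = 1 -> 0 < sg * vcross (vsub S Q) (vsub P Q) ->
  sg * vcross (vsub S Q) (vsub P Q) =
    vnorm (vsub P Q) * vnorm (vsub S Q) * sin (angle P Q S).
Proof.
  intros Hsg Hx. rewrite vcross_antisym in Hx |- *.
  assert (Hx0 : vcross (vsub P Q) (vsub S Q) <> 0) by (intro Z; rewrite Z in Hx; lra).
  destruct (vnorm_pos_of_vcross _ _ Hx0) as [Hu Hv].
  pose proof (angle_cos P Q S Hu Hv) as Hc.
  assert (Hs : 0 <= sin (angle P Q S)) by (apply sin_ge_0; apply angle_bounds).
  apply Rsqr_inj; [lra | apply Rmult_le_pos; [nra | exact Hs] |].
  pose proof (lagrange_identity (vsub P Q) (vsub S Q)) as Hl.
  rewrite <- (vnorm_sqr (vsub P Q)), <- (vnorm_sqr (vsub S Q)), Hc in Hl.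
  pose proof (sin2_cos2 (angle P Q S)) as Hsc.
  unfold Rsqr in *. nra.
Qed.

Lemma acute_vdot (P Q S : point) :
  angle P Q S < PI / 2 -> 0 < vdot (vsub P Q) (vsub S Q).
Proof.
  intros Ha.
  assert (Hu := sqrt_pos (vdot (vsub P Q) (vsub P Q))).
  assert (Hv := sqrt_pos (vdot (vsub S Q) (vsub S Q))).
  fold (vnorm (vsub P Q)) (vnorm (vsub S Q)) in Hu, Hv.
  destruct (Req_dec (vnorm (vsub P Q) * vnorm (vsub S Q)) 0) as [Z | Z].
  - (* a degenerate angle is acos (x / 0) = acos 0 = PI / 2 *)
    unfold angle in Ha. rewrite Z, Rdiv_0_r, acos_0 in Ha. lra.
  - assert (0 < vnorm (vsub P Q)) by (destruct Hu as [|E]; [|rewrite <- E in Z]; lra).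
    assert (0 < vnorm (vsub S Q)) by (destruct Hv as [|E]; [|rewrite <- E in Z]; lra).
    rewrite angle_cos by assumption.
    assert (0 < cos (angle P Q S)) by (pose proof (angle_bounds P Q S); apply cos_gt_0; lra).
    apply Rmult_lt_0_compat; [apply Rmult_lt_0_compat|]; assumption.
Qed.

(** * Polar form in a frame along a diagonal *)

(* sg = 1 or -1 selects the orientation of the frame (w, sg * perp w). *)
Definition polar (w : point) (sg r th : R) : point :=
  vscale r (vadd (vscale (cos th) w) (vscale (sg * sin th) (perp w))).

Lemma polar_vopp_frame (w : point) (sg r th : R) :
  polar (vopp w) sg r th = vopp (polar w sg r th).
Proof. unfold polar; vring. Qed.

Lemma polar_opp_orientation (w : point) (sg r th : R) :
  polar w (- sg) r th = polar w sg r (- th).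
Proof. unfold polar; rewrite cos_neg, sin_neg; vring. Qed.

Lemma vopp_polar (w : point) (sg r th : R) :
  vopp (polar w sg r th) = polar w sg r (th - PI).
Proof. unfold polar; rewrite cos_minus, sin_minus, cos_PI, sin_PI; vring. Qed.

Lemma polar_add_2PI (w : point) (sg r th : R) :
  polar w sg r (th + 2 * PI) = polar w sg r th.
Proof. unfold polar; rewrite cos_plus, sin_plus, cos_2PI, sin_2PI; vring. Qed.

Lemma polar_vdot (w : point) (sg r r' th th' : R) :
  vdot w w = 1 -> sg * sg = 1 ->
  vdot (polar w sg r th) (polar w sg r' th') = r * r' * cos (th' - th).
Proof.
  intros Hw Hsg. rewrite cos_minus.
  transitivity (r * r' * (cos th' * cos th + sg * sg * (sin th' * sin th)) * vdot w w);
    [unfold polar; vring | rewrite Hw, Hsg; ring].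
Qed.

Lemma polar_vcross (w : point) (sg r r' th th' : R) :
  vdot w w = 1 ->
  vcross (polar w sg r th) (polar w sg r' th') = sg * r * r' * sin (th' - th).
Proof.
  intros Hw. rewrite sin_minus.
  transitivity (sg * r * r' * (sin th' * cos th - cos th' * sin th) * vdot w w);
    [unfold polar; vring | rewrite Hw; ring].
Qed.

Lemma polar_of_frame (u v : point) (sg r l th : R) :
  sg * sg = 1 -> 0 < r -> 0 < l -> l * l = vdot v v ->
  vdot u v = r * l * cos th -> sg * vcross v u = r * l * sin th ->
  u = polar (vscale (/ l) v) sg r th.
Proof.
  intros Hsg Hr Hl Hll Hc Hs.
  assert (Hc' : cos th = vdot u v / (r * l)) by (rewrite Hc; field; lra).
  assert (Hs' : sg * sin th = vcross v u / (r * l)).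
  { apply (Rmult_eq_reg_l (r * l)); [|nra].
    transitivity (sg * (r * l * sin th)); [ring|]. rewrite <- Hs.
    transitivity (sg * sg * vcross v u); [ring|]. rewrite Hsg. field. lra. }
  unfold polar; rewrite Hc', Hs'.
  destruct u as [u1 u2], v as [v1 v2]; unfold vdot, vcross in *; simpl in *.
  unfold vadd, vscale, perp; simpl. f_equal.
  - transitivity (((u1 * v1 + u2 * v2) * v1 - (v1 * u2 - v2 * u1) * v2) / (l * l));
      [rewrite Hll; field | field]; nra.
  - transitivity (((u1 * v1 + u2 * v2) * v2 + (v1 * u2 - v2 * u1) * v1) / (l * l));
      [rewrite Hll; field | field]; nra.
Qed.

Lemma angle_polar (P Q S : point) (sg : R) :
  sg * sg = 1 -> 0 < sg * vcross (vsub S Q) (vsub P Q) ->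
  vsub P Q = polar (vunit (vsub S Q)) sg (vnorm (vsub P Q)) (angle P Q S).
Proof.
  intros Hsg Hx.
  assert (Hx0 : vcross (vsub P Q) (vsub S Q) <> 0)
    by (intro Z; rewrite vcross_antisym, Z in Hx; lra).
  destruct (vnorm_pos_of_vcross _ _ Hx0) as [Hu Hv].
  apply polar_of_frame; auto using vnorm_sqr, angle_cos, angle_sin.
Qed.

(** * Triangles on the diagonal *)

Lemma cos_sin_bounds_PI6_PI3 (x : R) :
  PI / 6 < x < PI / 3 -> 1 / 2 < cos x /\ 4 * cos x ^ 2 < 3 /\ 0 < sin x.
Proof.
  intros Hx. pose proof PI_RGT_0.
  assert (c1 : cos (PI / 3) < cos x) by (apply cos_decreasing_1; lra).
  assert (c2 : cos x < cos (PI / 6)) by (apply cos_decreasing_1; lra).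
  rewrite cos_PI3 in c1. rewrite cos_PI6 in c2.
  assert (sqrt 3 * sqrt 3 = 3) by (apply sqrt_sqrt; lra).
  repeat split; [lra | nra | apply sin_gt_0; lra].
Qed.

Lemma cos_sin_bounds_PI3_2PI3 (y : R) :
  PI / 3 < y < 2 * PI / 3 -> 4 * cos y ^ 2 < 1 /\ 0 < sin y.
Proof.
  intros Hy. pose proof PI_RGT_0.
  assert (c1 : cos y < cos (PI / 3)) by (apply cos_decreasing_1; lra).
  assert (c2 : cos (PI - PI / 3) < cos y) by (apply cos_decreasing_1; lra).
  rewrite Rtrigo_facts.cos_pi_minus, cos_PI3 in c2. rewrite cos_PI3 in c1.
  split; [nra | apply sin_gt_0; lra].
Qed.

Lemma law_of_sines_bounds (r l a c : R) :
  PI / 6 < a < PI / 3 -> PI / 6 < c < PI / 3 -> 0 < r -> 0 < l ->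
  r * sin (a + c) = l * sin c -> l / 2 < r < l.
Proof.
  intros Ha Hc Hr Hl E.
  destruct (cos_sin_bounds_PI3_2PI3 (a + c)) as [Hac Hsac]; [lra|].
  destruct (cos_sin_bounds_PI6_PI3 c Hc) as (Hc1 & Hc2 & Hsc).
  pose proof (sin2_cos2 (a + c)) as P1. pose proof (sin2_cos2 c) as P2.
  pose proof (SIN_bound (a + c)) as Hs1. unfold Rsqr in P1, P2.
  assert (Hsq : sin c * sin c < sin (a + c) * sin (a + c)) by nra.
  assert (Hlt : sin c < sin (a + c)) by nra.
  assert (Hhalf : 1 / 2 < sin c) by nra.
  split; nra.
Qed.

Lemma triangle_polar (A B C : point) (sg : R) :
  sg * sg = 1 -> 0 < sg * vcross (vsub C A) (vsub B A) ->
  vsub B A = polar (vunit (vsub C A)) sg (vnorm (vsub B A)) (angle B A C) /\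
  vsub C B = polar (vunit (vsub C A)) sg (vnorm (vsub C B)) (- angle A C B).
Proof.
  intros Hsg Hx. split; [apply angle_polar; assumption|].
  assert (Hb : vsub B C = polar (vunit (vsub A C)) (- sg) (vnorm (vsub B C)) (angle B C A)).
  { apply angle_polar; [lra|].
    replace (vcross (vsub A C) (vsub B C)) with (- vcross (vsub C A) (vsub B A)) by vring.
    lra. }
  rewrite vunit_vsub_sym, polar_vopp_frame, polar_opp_orientation, angle_sym,
    vnorm_vsub_sym in Hb.
  transitivity (vopp (vsub B C)); [vring | rewrite Hb; apply vopp_involutive].
Qed.

Lemma triangle_side_bounds (A B C : point) (sg : R) :
  sg * sg = 1 -> 0 < sg * vcross (vsub C A) (vsub B A) ->
  PI / 6 < angle B A C < PI / 3 -> PI / 6 < angle A C B < PI / 3 ->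
  vnorm (vsub C A) / 2 < vnorm (vsub B A) < vnorm (vsub C A) /\
  vnorm (vsub C A) / 2 < vnorm (vsub C B) < vnorm (vsub C A).
Proof.
  intros Hsg Hx Ha Hc.
  assert (HxC : 0 < sg * vcross (vsub B C) (vsub A C))
    by (replace (vcross (vsub B C) (vsub A C)) with (vcross (vsub C A) (vsub B A)) by vring;
        exact Hx).
  assert (Hx0 : vcross (vsub C A) (vsub B A) <> 0) by (intro Z; rewrite Z in Hx; lra).
  assert (Hx1 : vcross (vsub B C) (vsub A C) <> 0) by (intro Z; rewrite Z in HxC; lra).
  destruct (vnorm_pos_of_vcross _ _ Hx0) as [Hl Hr0].
  destruct (vnorm_pos_of_vcross _ _ Hx1) as [Hr1 Hl'].
  pose proof (angle_cos B A C Hr0 Hl) as Hc0.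
  pose proof (angle_cos A C B Hl' Hr1) as Hc1.
  pose proof (angle_sin B A C sg Hsg Hx) as Hs0.
  pose proof (angle_sin A C B sg Hsg HxC) as Hs1.
  rewrite (vnorm_vsub_sym A C), (vnorm_vsub_sym B C) in Hc1, Hs1.
  rewrite (vnorm_vsub_sym B C) in Hr1.
  set (l := vnorm (vsub C A)) in *.
  set (r0 := vnorm (vsub B A)) in *. set (r1 := vnorm (vsub C B)) in *.
  set (a := angle B A C) in *. set (c := angle A C B) in *.
  assert (Ecos : r0 * cos a + r1 * cos c = l).
  { apply (Rmult_eq_reg_l l); [|lra].
    transitivity (vdot (vsub B A) (vsub C A) + vdot (vsub A C) (vsub B C));
      [rewrite Hc0, Hc1; ring|].
    unfold l; rewrite vnorm_sqr; vring. }
  assert (Esin : r0 * sin a = r1 * sin c).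
  { apply (Rmult_eq_reg_l l); [|lra].
    transitivity (sg * vcross (vsub C A) (vsub B A)); [rewrite Hs0; ring|].
    replace (vcross (vsub C A) (vsub B A)) with (vcross (vsub B C) (vsub A C)) by vring.
    rewrite Hs1; ring. }
  split.
  - apply (law_of_sines_bounds r0 l a c); try assumption.
    rewrite sin_plus, <- Ecos.
    transitivity ((r0 * sin a) * cos c + r0 * cos a * sin c); [ring | rewrite Esin; ring].
  - apply (law_of_sines_bounds r1 l c a); try assumption.
    rewrite Rplus_comm, sin_plus, <- Ecos.
    transitivity (r1 * sin a * cos c + cos a * (r1 * sin c)); [ring | rewrite <- Esin; ring].
Qed.

(** * Sides of a near-square quadrilateral *)

Lemma near_square_angle_bounds (A B C D : point) :
  near_square (PI / 12) A B C D ->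
  PI / 6 < a1 A B C D < PI / 3 /\ PI / 6 < a2 A B C D < PI / 3 /\
  PI / 6 < a3 A B C D < PI / 3 /\ PI / 6 < a4 A B C D < PI / 3.
Proof.
  intros (N1 & N2 & N3 & N4).
  apply Rabs_def2 in N1, N2, N3, N4. lra.
Qed.

Lemma exists_sign (x : R) : x <> 0 -> exists sg, sg * sg = 1 /\ 0 < sg * x.
Proof.
  intros Hx. destruct (Rlt_or_le 0 x).
  - exists 1. split; lra.
  - exists (-1). split; lra.
Qed.

Lemma near_square_polar (A B C D : point) :
  diag_quadrilateral A B C D -> near_square (PI / 12) A B C D ->
  exists w sg l r0 r1 r2 r3,
    vdot w w = 1 /\ sg * sg = 1 /\
    l / 2 < r0 < l /\ l / 2 < r1 < l /\ l / 2 < r2 < l /\ l / 2 < r3 < l /\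
    vsub B A = polar w sg r0 (a1 A B C D) /\
    vsub C B = polar w sg r1 (- a2 A B C D) /\
    vsub D C = polar w sg r2 (a3 A B C D - PI) /\
    vsub A D = polar w sg r3 (- PI - a4 A B C D).
Proof.
  intros Hdiag Hnear.
  destruct (near_square_angle_bounds A B C D Hnear) as (R1 & R2 & R3 & R4).
  unfold diag_quadrilateral in Hdiag. unfold a1, a2, a3, a4 in *.
  rewrite (angle_sym C A D) in *.
  assert (HB : vcross (vsub C A) (vsub B A) <> 0) by (intro Z; rewrite Z in Hdiag; lra).
  destruct (exists_sign _ HB) as (sg & Hsg & HsgB).
  assert (HsgD : 0 < - sg * vcross (vsub C A) (vsub D A)) by nra.
  assert (Hsg' : - sg * - sg = 1) by lra.
  destruct (vnorm_pos_of_vcross _ _ HB) as [Hl _].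
  destruct (triangle_polar A B C sg Hsg HsgB) as [E0 E1].
  destruct (triangle_polar A D C (- sg) Hsg' HsgD) as [E3 E2].
  destruct (triangle_side_bounds A B C sg Hsg HsgB R1 R2) as [L0 L1].
  destruct (triangle_side_bounds A D C (- sg) Hsg' HsgD R4 R3) as [L3 L2].
  rewrite polar_opp_orientation, Ropp_involutive in E2.
  rewrite polar_opp_orientation in E3.
  set (r2 := vnorm (vsub C D)) in *. set (r3 := vnorm (vsub D A)) in *.
  exists (vunit (vsub C A)), sg, (vnorm (vsub C A)),
    (vnorm (vsub B A)), (vnorm (vsub C B)), r2, r3.
  repeat split; try lra.
  - apply vunit_vdot, Hl.
  - exact E0.
  - exact E1.
  - transitivity (vopp (vsub C D)); [vring | rewrite E2; apply vopp_polar].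
  - transitivity (vopp (vsub D A)); [vring | rewrite E3, vopp_polar; f_equal; ring].
Qed.

(* For consecutive sides u = X - W, a = Y - X, v = Z - Y: the angles YWX and
   XZY are acute, the chain turns one way, and u and v point in roughly
   opposite directions. *)
Definition admissible_chain (u a v : point) : Prop :=
  0 < vdot u u + vdot u a /\ 0 < vdot v v + vdot a v /\
  0 < vcross u a * vcross a v /\ vdot u v < 0.

Lemma polar_chain (w : point) (sg l r r' r'' th th' th'' : R) :
  vdot w w = 1 -> sg * sg = 1 ->
  l / 2 < r < l -> l / 2 < r' < l -> l / 2 < r'' < l ->
  - (2 * PI / 3) < th' - th < - (PI / 3) ->
  - (2 * PI / 3) < th'' - th' < - (PI / 3) ->
  admissible_chain (polar w sg r th) (polar w sg r' th') (polar w sg r'' th'').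
Proof.
  intros Hw Hsg Hr Hr' Hr'' T1 T2. pose proof PI_RGT_0.
  destruct (cos_sin_bounds_PI3_2PI3 (- (th' - th))) as [C1 _]; [lra|].
  destruct (cos_sin_bounds_PI3_2PI3 (- (th'' - th'))) as [C2 _]; [lra|].
  rewrite cos_neg in C1, C2.
  assert (S1 : sin (th' - th) < 0) by (apply sin_lt_0_var; lra).
  assert (S2 : sin (th'' - th') < 0) by (apply sin_lt_0_var; lra).
  assert (C3 : cos (th'' - th) < 0).
  { replace (th'' - th) with ((th'' - th) + PI - PI) by ring.
    rewrite cos_minus, cos_PI, sin_PI.
    assert (0 < cos (th'' - th + PI)) by (apply cos_gt_0; lra). lra. }
  unfold admissible_chain.
  rewrite !polar_vdot, !polar_vcross, !Rminus_diag, cos_0 by assumption.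
  assert (B1 : - (1 / 2) < cos (th' - th) < 1 / 2) by (split; nra).
  assert (B2 : - (1 / 2) < cos (th'' - th') < 1 / 2) by (split; nra).
  assert (0 < r) by lra. assert (0 < r') by lra. assert (0 < r'') by lra.
  repeat split.
  - assert (0 < r * (r + r' * cos (th' - th))) by (apply Rmult_lt_0_compat; nra). nra.
  - assert (0 < r'' * (r'' + r' * cos (th'' - th'))) by (apply Rmult_lt_0_compat; nra). nra.
  - replace (sg * r * r' * sin (th' - th) * (sg * r' * r'' * sin (th'' - th')))
      with ((sg * sg) * (r * r' * (r' * r'')) * (sin (th' - th) * sin (th'' - th'))) by ring.
    rewrite Hsg, Rmult_1_l.
    apply Rmult_lt_0_compat; [repeat apply Rmult_lt_0_compat; assumption | nra].
  - assert (0 < r * r'') by nra. nra.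
Qed.

Lemma vert_mod4 (A B C D : point) (n : nat) : vert A B C D (n mod 4) = vert A B C D n.
Proof. unfold vert. rewrite Nat.Div0.mod_mod. reflexivity. Qed.

Lemma vert_add_mod4 (A B C D : point) (n k : nat) :
  vert A B C D (n + k) = vert A B C D (n mod 4 + k).
Proof. unfold vert. rewrite Nat.Div0.add_mod_idemp_l. reflexivity. Qed.

Lemma vert_add4 (A B C D : point) (n : nat) : vert A B C D (n + 4) = vert A B C D n.
Proof.
  unfold vert. replace (n + 4)%nat with (n + 1 * 4)%nat by lia.
  rewrite Nat.Div0.mod_add. reflexivity.
Qed.

Lemma near_square_chain (A B C D : point) (n : nat) :
  diag_quadrilateral A B C D -> near_square (PI / 12) A B C D ->
  admissible_chain (vsub (vert A B C D n) (vert A B C D (n + 3)))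
                   (vsub (vert A B C D (n + 1)) (vert A B C D n))
                   (vsub (vert A B C D (n + 2)) (vert A B C D (n + 1))).
Proof.
  intros Hdiag Hnear.
  destruct (near_square_angle_bounds _ _ _ _ Hnear) as (R1 & R2 & R3 & R4).
  destruct (near_square_polar _ _ _ _ Hdiag Hnear)
    as (w & sg & l & r0 & r1 & r2 & r3 & Hw & Hsg & L0 & L1 & L2 & L3 & E0 & E1 & E2 & E3).
  pose proof PI_RGT_0.
  replace (vert A B C D n) with (vert A B C D (n + 0)) by (f_equal; lia).
  rewrite !(vert_add_mod4 A B C D n).
  assert (Hn : (n mod 4 < 4)%nat) by (apply Nat.mod_upper_bound; lia).
  destruct (n mod 4) as [|[|[|[|m]]]]; [| | | | lia]; unfold vert; cbn -[vsub].
  (* the direction angle drops by between pi/3 and 2pi/3 at each vertex; at A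
     it wraps around by 2pi *)
  - rewrite E0, E1, E3, <- (polar_add_2PI w sg r3).
    apply (polar_chain w sg l); try assumption; lra.
  - rewrite E0, E1, E2. apply (polar_chain w sg l); try assumption; lra.
  - rewrite E1, E2, E3. apply (polar_chain w sg l); try assumption; lra.
  - assert (E0' : vsub B A = polar w sg r0 (a1 A B C D - 2 * PI))
      by (rewrite E0, <- (polar_add_2PI w sg r0 (a1 A B C D - 2 * PI)); f_equal; ring).
    rewrite E0', E2, E3. apply (polar_chain w sg l); try assumption; lra.
Qed.

(** * The Fagnano orbit *)

Definition reflection_law (u P Q R : point) : Prop :=
  exists lam, 0 < lam /\ vsub R Q = vscale lam (reflect u (vsub Q P)).

Lemma reflect_criterion (u d e : point) :
  vcross d u * vcross e u < 0 ->
  vdot d u * vcross e u + vdot e u * vcross d u = 0 ->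
  exists lam, 0 < lam /\ e = vscale lam (reflect u d).
Proof.
  intros Hs He.
  assert (Hd : vcross d u <> 0) by (intro Z; rewrite Z in Hs; lra).
  assert (Hu : vdot u u <> 0).
  { intro Z. apply Hd. destruct u as [u1 u2]; unfold vdot, vcross in *; simpl in *.
    assert (u1 = 0) by nra. assert (u2 = 0) by nra. subst; ring. }
  exists (- vcross e u / vcross d u). split.
  - replace (- vcross e u / vcross d u)
      with (- (vcross d u * vcross e u) / (vcross d u * vcross d u)) by (field; exact Hd).
    apply Rdiv_lt_0_compat; nra.
  - destruct u as [u1 u2], d as [d1 d2], e as [e1 e2].
    unfold reflect, vdot, vcross, vscale, vsub in *; simpl in *.
    f_equal; apply Rminus_diag_uniq.
    + transitivity (u1 * ((d1 * u1 + d2 * u2) * (e1 * u2 - e2 * u1)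
                         + (e1 * u1 + e2 * u2) * (d1 * u2 - d2 * u1))
                    / ((d1 * u2 - d2 * u1) * (u1 * u1 + u2 * u2))); [field; auto|].
      rewrite He. field. auto.
    + transitivity (u2 * ((d1 * u1 + d2 * u2) * (e1 * u2 - e2 * u1)
                         + (e1 * u1 + e2 * u2) * (d1 * u2 - d2 * u1))
                    / ((d1 * u2 - d2 * u1) * (u1 * u1 + u2 * u2))); [field; auto|].
      rewrite He. field. auto.
Qed.

Lemma reflection_law_vscale (c : R) (u P Q R : point) :
  c <> 0 -> vdot u u <> 0 ->
  reflection_law (vscale c u) P Q R -> reflection_law u P Q R.
Proof.
  intros Hc Hu.
  assert (E : reflect (vscale c u) (vsub Q P) = reflect u (vsub Q P)).
  { assert (Hcu : vdot (vscale c u) (vscale c u) <> 0).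
    { rewrite vdot_vscale. apply Rmult_integral_contrapositive_currified; [nra | exact Hu]. }
    unfold reflect. vsimpl. f_equal; field; split; assumption. }
  unfold reflection_law. rewrite E. easy.
Qed.

Definition foot (P Q S : point) : point :=
  vadd Q (vscale (vdot (vsub P Q) (vsub S Q) / vdot (vsub S Q) (vsub S Q)) (vsub S Q)).

(* Same shape as on_open_side, which is therefore convertible to
   in_open_segment (vert i) (vert (i + 1)). *)
Definition in_open_segment (X Y P : point) : Prop :=
  exists t, 0 < t < 1 /\ P = (fst X + t * (fst Y - fst X), snd X + t * (snd Y - snd X)).

Lemma foot_in_open_segment (P Q S : point) :
  0 < vdot (vsub P Q) (vsub S Q) -> 0 < vdot (vsub P S) (vsub Q S) ->
  in_open_segment Q S (foot P Q S).
Proof.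
  intros HQ HS.
  assert (Hsum : vdot (vsub S Q) (vsub S Q) =
                 vdot (vsub P Q) (vsub S Q) + vdot (vsub P S) (vsub Q S)) by vring.
  exists (vdot (vsub P Q) (vsub S Q) / vdot (vsub S Q) (vsub S Q)). split; [|reflexivity].
  rewrite Hsum. split.
  - apply Rdiv_lt_0_compat; lra.
  - apply Rmult_lt_reg_r with (vdot (vsub P Q) (vsub S Q) + vdot (vsub P S) (vsub Q S)); [lra|].
    field_simplify; lra.
Qed.

Lemma foot_sym (P Q S : point) :
  vdot (vsub S Q) (vsub S Q) <> 0 -> foot P Q S = foot P S Q.
Proof.
  intros H.
  assert (vdot (vsub Q S) (vsub Q S) <> 0)
    by (replace (vdot (vsub Q S) (vsub Q S)) with (vdot (vsub S Q) (vsub S Q)) by vring; exact H).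
  unfold foot; vsimpl; f_equal; field; assumption.
Qed.

Lemma foot_extend (P Q S : point) (c : R) :
  c <> 0 -> vdot (vsub S Q) (vsub S Q) <> 0 ->
  foot P Q (vadd Q (vscale c (vsub S Q))) = foot P Q S.
Proof.
  intros Hc H.
  assert (vdot (vsub (vadd Q (vscale c (vsub S Q))) Q)
               (vsub (vadd Q (vscale c (vsub S Q))) Q) <> 0).
  { replace (vdot _ _) with (c * c * vdot (vsub S Q) (vsub S Q)) by vring.
    apply Rmult_integral_contrapositive_currified; [nra | exact H]. }
  unfold foot; vsimpl; f_equal; field; split; assumption.
Qed.

Definition acute_triangle (A B C : point) : Prop :=
  0 < vdot (vsub B A) (vsub C A) /\ 0 < vdot (vsub A B) (vsub C B) /\
  0 < vdot (vsub A C) (vsub B C).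

Lemma acute_triangle_rotate (A B C : point) : acute_triangle A B C -> acute_triangle B C A.
Proof. unfold acute_triangle; vsimpl; intros; repeat split; lra. Qed.

Lemma acute_triangle_vcross (A B C : point) :
  acute_triangle A B C -> vcross (vsub B A) (vsub C B) <> 0.
Proof.
  intros (HA & HB & HC) Z.
  set (b := vsub B A) in *. set (c := vsub C A) in *.
  assert (Eb : vdot (vsub A B) (vsub C B) = vdot b b - vdot b c) by (unfold b, c; vring).
  assert (Ec : vdot (vsub A C) (vsub B C) = vdot c c - vdot b c) by (unfold b, c; vring).
  assert (Ez : vcross b c = 0) by (rewrite <- Z; unfold b, c; vring).
  pose proof (lagrange_identity b c) as L. rewrite Ez in L.
  nra.
Qed.

Lemma orthic_bounce (A B C : point) :
  acute_triangle A B C ->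
  reflection_law (vsub C B) (foot C A B) (foot A B C) (foot B C A).
Proof.
  intros Hacute.
  pose proof (acute_triangle_vcross A B C Hacute) as Hk.
  destruct Hacute as (HA & HB & HC).
  assert (NA : vdot (vsub B A) (vsub B A) <> 0) by (apply vdot_self_pos in HA; lra).
  assert (NB : vdot (vsub C B) (vsub C B) <> 0)
    by (rewrite vdot_comm in HB; apply vdot_self_pos in HB; lra).
  assert (NC : vdot (vsub A C) (vsub A C) <> 0) by (apply vdot_self_pos in HC; lra).
  set (k := vcross (vsub B A) (vsub C B)) in *.
  set (HA' := foot A B C). set (HB' := foot B C A). set (HC' := foot C A B).
  assert (Ed : vcross (vsub HA' HC') (vsub C B) =
               vdot (vsub A B) (vsub C B) / vdot (vsub B A) (vsub B A) * k).
  { unfold HA', HC', k, foot; vsimpl; field; repeat split; assumption. }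
  assert (Ee : vcross (vsub HB' HA') (vsub C B) =
               - (vdot (vsub A C) (vsub B C) / vdot (vsub A C) (vsub A C)) * k).
  { unfold HA', HB', k, foot; vsimpl; field; repeat split; assumption. }
  apply reflect_criterion.
  - (* the coefficients of k have the signs of the angles at B and C *)
    rewrite Ed, Ee.
    set (p := vdot (vsub A B) (vsub C B) / vdot (vsub B A) (vsub B A)).
    set (q := vdot (vsub A C) (vsub B C) / vdot (vsub A C) (vsub A C)).
    assert (0 < p) by (apply Rdiv_lt_0_compat; [assumption | apply (vdot_self_pos _ _ HA)]).
    assert (0 < q) by (apply Rdiv_lt_0_compat; [assumption | apply (vdot_self_pos _ _ HC)]).
    assert (0 < k * k) by (apply Rsqr_pos_lt; exact Hk).
    replace (p * k * (- q * k)) with (- (p * q * (k * k))) by ring.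
    assert (0 < p * q * (k * k))
      by (apply Rmult_lt_0_compat; [apply Rmult_lt_0_compat|]; assumption).
    lra.
  - unfold HA', HB', HC', foot; vsimpl; field; repeat split; assumption.
Qed.

Lemma lines_meet (W X Y Z : point) :
  0 < vdot (vsub W X) (vsub Y X) -> 0 < vdot (vsub X Y) (vsub Z Y) ->
  0 < vcross (vsub X W) (vsub Y X) * vcross (vsub Y X) (vsub Z Y) ->
  exists s s', 0 < s /\ 0 < s' /\
    vadd X (vscale s (vsub W X)) = vadd Y (vscale s' (vsub Z Y)).
Proof.
  intros HX HY Hturn.
  set (p := vcross (vsub X W) (vsub Y X)) in *.
  set (q := vcross (vsub Y X) (vsub Z Y)) in *.
  set (m := vcross (vsub X W) (vsub Z Y)).
  assert (Ha : 0 < vdot (vsub Y X) (vsub Y X))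
    by (rewrite vdot_comm in HX; apply vdot_self_pos in HX; exact HX).
  assert (Hframe : vdot (vsub Y X) (vsub Y X) * m =
                   - vdot (vsub W X) (vsub Y X) * q - p * vdot (vsub X Y) (vsub Z Y))
    by (unfold m, p, q; vring).
  assert (Hmq : vdot (vsub Y X) (vsub Y X) * (m * q) < 0).
  { replace (vdot (vsub Y X) (vsub Y X) * (m * q))
      with (- vdot (vsub W X) (vsub Y X) * (q * q) - (p * q) * vdot (vsub X Y) (vsub Z Y))
      by (rewrite <- (Rmult_assoc _ m), Hframe; ring).
    assert (0 <= q * q) by nra. nra. }
  assert (Hmp : vdot (vsub Y X) (vsub Y X) * (m * p) < 0).
  { replace (vdot (vsub Y X) (vsub Y X) * (m * p))
      with (- vdot (vsub W X) (vsub Y X) * (p * q) - (p * p) * vdot (vsub X Y) (vsub Z Y))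
      by (rewrite <- (Rmult_assoc _ m), Hframe; ring).
    assert (0 <= p * p) by nra. nra. }
  rewrite <- (Rmult_0_r (vdot (vsub Y X) (vsub Y X))) in Hmq, Hmp.
  apply Rmult_lt_reg_l in Hmq, Hmp; try exact Ha.
  assert (Hm : m <> 0) by (intro Z0; rewrite Z0 in Hmq; lra).
  exists (- q / m), (- p / m). repeat split.
  - replace (- q / m) with (- (m * q) / (m * m)) by (field; exact Hm).
    apply Rdiv_lt_0_compat; nra.
  - replace (- p / m) with (- (m * p) / (m * m)) by (field; exact Hm).
    apply Rdiv_lt_0_compat; nra.
  - unfold p, q, m in *. vsimpl. f_equal; field; exact Hm.
Qed.

Lemma apex_acute (W X Y Z O : point) (s s' : R) :
  0 < s -> 0 < s' ->
  O = vadd X (vscale s (vsub W X)) -> O = vadd Y (vscale s' (vsub Z Y)) ->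
  0 < vdot (vsub W X) (vsub Y X) -> 0 < vdot (vsub X Y) (vsub Z Y) ->
  vdot (vsub X W) (vsub Z Y) < 0 ->
  acute_triangle O X Y.
Proof.
  intros Hs Hs' HOX HOY HX HY Hopp. unfold acute_triangle.
  replace (vsub X O) with (vscale s (vsub X W)) by (rewrite HOX; vring).
  replace (vsub Y O) with (vscale (- s') (vsub Z Y)) by (rewrite HOY; vring).
  replace (vsub O X) with (vscale s (vsub W X)) by (rewrite HOX; vring).
  replace (vsub O Y) with (vscale s' (vsub Z Y)) by (rewrite HOY; vring).
  rewrite vdot_vscale, !vdot_vscale_l, (vdot_comm (vsub Z Y)).
  assert (0 < s * s') by (apply Rmult_lt_0_compat; assumption).
  repeat split; nra.
Qed.

(* O is the apex of the triangle cut off by the lines WX and ZY, and the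
   three points are the feet of its altitudes. *)
Lemma fagnano_chain (W X Y Z : point) :
  0 < vdot (vsub W X) (vsub Y X) -> 0 < vdot (vsub X Y) (vsub Z Y) ->
  admissible_chain (vsub X W) (vsub Y X) (vsub Z Y) ->
  exists P Q R,
    in_open_segment X Y P /\ in_open_segment Y Z Q /\ in_open_segment W X R /\
    reflection_law (vsub Y X) R P Q /\ reflection_law (vsub Z Y) P Q R /\
    reflection_law (vsub X W) Q R P.
Proof.
  intros HX HY (HW & HZ & Hturn & Hopp).
  destruct (lines_meet W X Y Z HX HY Hturn) as (s & s' & Hs & Hs' & HO).
  set (O := vadd X (vscale s (vsub W X))) in HO.
  assert (Hacute : acute_triangle O X Y) by (apply (apex_acute W X Y Z O s s'); auto).
  assert (EXO : vsub X O = vscale s (vsub X W)) by (unfold O; vring).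
  assert (EOY : vsub O Y = vscale s' (vsub Z Y)) by (rewrite HO; vring).
  assert (NX : vdot (vsub W X) (vsub W X) <> 0) by (apply vdot_self_pos in HX; lra).
  assert (NY : vdot (vsub Z Y) (vsub Z Y) <> 0)
    by (rewrite vdot_comm in HY; apply vdot_self_pos in HY; lra).
  assert (NX' : vdot (vsub X W) (vsub X W) <> 0)
    by (replace (vdot (vsub X W) (vsub X W)) with (vdot (vsub W X) (vsub W X)) by vring; exact NX).
  assert (NO : vdot (vsub X O) (vsub X O) <> 0).
  { rewrite EXO, vdot_vscale. apply Rmult_integral_contrapositive_currified; [nra | exact NX']. }
  assert (EQ : foot X Y O = foot X Y Z) by (rewrite HO; apply foot_extend; lra).
  assert (ER : foot Y O X = foot Y W X).
  { rewrite foot_sym by exact NO.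
    unfold O. rewrite foot_extend by lra. apply foot_sym; exact NX. }
  exists (foot O X Y), (foot X Y Z), (foot Y W X).
  pose proof (orthic_bounce O X Y Hacute) as BP.
  pose proof (orthic_bounce X Y O (acute_triangle_rotate _ _ _ Hacute)) as BQ.
  pose proof (orthic_bounce Y O X (acute_triangle_rotate _ _ _
                 (acute_triangle_rotate _ _ _ Hacute))) as BR.
  rewrite EQ, ER in BP, BQ, BR.
  destruct Hacute as (_ & HOX & HOY).
  repeat split.
  - apply foot_in_open_segment; assumption.
  - apply foot_in_open_segment; [exact HY|].
    replace (vdot (vsub X Z) (vsub Y Z))
      with (vdot (vsub Z Y) (vsub Z Y) + vdot (vsub Y X) (vsub Z Y)) by vring.
    exact HZ.
  - apply foot_in_open_segment; [|rewrite vdot_comm; exact HX].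
    replace (vdot (vsub Y W) (vsub X W))
      with (vdot (vsub X W) (vsub X W) + vdot (vsub X W) (vsub Y X)) by vring.
    exact HW.
  - exact BP.
  - rewrite EOY in BQ. apply reflection_law_vscale in BQ; [exact BQ | lra | exact NY].
  - rewrite EXO in BR. apply reflection_law_vscale in BR; [exact BR | lra | exact NX'].
Qed.

Lemma mod4_add_neq (n k : nat) : (0 < k < 4)%nat -> (n mod 4 <> (n + k) mod 4)%nat.
Proof.
  intros Hk E. rewrite Nat.Div0.add_mod, (Nat.mod_small k) in E by lia.
  pose proof (Nat.mod_upper_bound n 4).
  destruct (n mod 4) as [|[|[|[|]]]], k as [|[|[|[|]]]]; simpl in E; lia.
Qed.

Definition cyc3 {T : Type} (x y z : T) (j : nat) : T :=
  match (j mod 3)%nat with 0%nat => x | 1%nat => y | _ => z end.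

Lemma mod3_cases (j : nat) : (j mod 3 = 0 \/ j mod 3 = 1 \/ j mod 3 = 2)%nat.
Proof. pose proof (Nat.mod_upper_bound j 3). lia. Qed.

Lemma cyc3_succ {T : Type} (x y z : T) (j : nat) : cyc3 x y z (S j) = cyc3 y z x j.
Proof.
  unfold cyc3. replace (S j) with (j + 1)%nat by lia. rewrite Nat.Div0.add_mod.
  destruct (mod3_cases j) as [-> | [-> | ->]]; reflexivity.
Qed.

Lemma billiard_path_of_three_bounces (A B C D P Q R : point) (i j k : nat) :
  (i mod 4 <> j mod 4)%nat -> (j mod 4 <> k mod 4)%nat -> (k mod 4 <> i mod 4)%nat ->
  on_open_side A B C D i P -> on_open_side A B C D j Q -> on_open_side A B C D k R ->
  reflection_law (vsub (vert A B C D (i + 1)) (vert A B C D i)) R P Q ->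
  reflection_law (vsub (vert A B C D (j + 1)) (vert A B C D j)) P Q R ->
  reflection_law (vsub (vert A B C D (k + 1)) (vert A B C D k)) Q R P ->
  periodic_billiard_path A B C D.
Proof.
  intros Hij Hjk Hki HP HQ HR BP BQ BR.
  assert (Hside : forall n p, on_open_side A B C D n p -> on_open_side A B C D (n mod 4) p).
  { intros n p. unfold on_open_side. rewrite vert_mod4, <- vert_add_mod4. easy. }
  exists 3%nat, (cyc3 P Q R), (cyc3 (i mod 4) (j mod 4) (k mod 4))%nat.
  split; [lia|]. split; [|split; [|split]].
  - intro n. rewrite Nat.add_comm. simpl. rewrite !cyc3_succ. easy.
  - intro n. unfold cyc3. destruct (mod3_cases n) as [-> | [-> | ->]];
      (split; [apply Nat.mod_upper_bound; lia | apply Hside; assumption]).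
  - intro n. rewrite cyc3_succ. unfold cyc3.
    destruct (mod3_cases n) as [-> | [-> | ->]]; auto.
  - intro n. rewrite !cyc3_succ. unfold cyc3.
    destruct (mod3_cases n) as [-> | [-> | ->]];
      rewrite <- vert_add_mod4, vert_mod4; assumption.
Qed.

Theorem proposition3p2p1 (A B C D : point) :
  diag_quadrilateral A B C D ->
  near_square (PI / 12) A B C D ->
  two_adjacent_acute A B C D ->
  periodic_billiard_path A B C D.
Proof.
  intros Hdiag Hnear (i & _ & HX & HY).
  unfold interior_angle in HX, HY. apply acute_vdot in HX, HY.
  assert (E2 : vert A B C D (i + 1 + 1) = vert A B C D (i + 2)) by (f_equal; lia).
  assert (E4 : vert A B C D (i + 1 + 3) = vert A B C D i)
    by (rewrite <- (vert_add4 A B C D i); f_equal; lia).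
  assert (E4' : vert A B C D (i + 3 + 1) = vert A B C D i)
    by (rewrite <- (vert_add4 A B C D i); f_equal; lia).
  rewrite E2, E4 in HY.
  destruct (fagnano_chain _ _ _ _ HX HY (near_square_chain A B C D i Hdiag Hnear))
    as (P & Q & R & HP & HQ & HR & BP & BQ & BR).
  apply (billiard_path_of_three_bounces A B C D P Q R i (i + 1) (i + 3));
    unfold on_open_side; rewrite ?E2, ?E4'; try assumption.
  - apply mod4_add_neq; lia.
  - replace (i + 3)%nat with (i + 1 + 2)%nat by lia. apply mod4_add_neq; lia.
  - apply not_eq_sym, mod4_add_neq; lia.
Qed.
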